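(* Let $\mathcal M=\{A,B,C,D\}$ be a discrete-time model with $A\in\mathbb C^{n\times n}$, $B\in\mathbb C^{n\times m}$, $C\in\mathbb C^{m\times n}$, $D\in\mathbb C^{m\times m}$, and let $X\in\mathbb X^{\gg}(\mathcal M)$. For nonsingular $T\in\mathbb C^{n\times n}$ put $$G(T):=\operatorname{diag}(T,T^{-\mathsf H},I_m)\,\big(D_s\widehat W(X,\mathcal M)D_s\big)\,\operatorname{diag}(T^{\mathsf H},T^{-1},I_m).$$ Then the minimum of $\operatorname{trace} G(T)$ over all nonsingular $T$ is attained by the matrices $T$ with $X=T^{\mathsf H}T$, for which $G(T)=D_s\widehat W(I_n,\mathcal M_T)D_s$, so that $$\min_{\det T\neq 0}\operatorname{trace} G(T)=\operatorname{trace}\big(D_s\widehat W(I_n,\mathcal M_T)D_s\big)\quad (X=T^{\mathsf H}T),$$ while the determinant is invariant: $\det G(T)$ is the same for all nonsingular $T$, and in particular equals $\det\big(D_s\widehat W(I_n,\mathcal M_T)D_s\big)$ for $X=T^{\mathsf H}T$.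
   Context: $\mathbb H_n$ denotes the set of $n\times n$ Hermitian matrices; $Y>0$ ($Y\ge 0$) means positive definite (semidefinite). For $X\in\mathbb H_n$ define $$W(X,\mathcal M)=\begin{bmatrix} X-A^{\mathsf H}XA & C^{\mathsf H}-A^{\mathsf H}XB\\ C-B^{\mathsf H}XA & D^{\mathsf H}+D-B^{\mathsf H}XB\end{bmatrix},$$ and $\mathbb X^{\gg}(\mathcal M)=\{X\in\mathbb H_n: W(X,\mathcal M)>0,\ X>0\}$. For $X>0$ define $$\widehat W(X,\mathcal M)=\begin{bmatrix} X^{-1} & A & B\\ A^{\mathsf H} & X & C^{\mathsf H}\\ B^{\mathsf H} & C & D^{\mathsf H}+D\end{bmatrix},$$ $D_s=\operatorname{diag}(I_n,I_n,I_m/\sqrt2)$, and for nonsingular $T$ the transformed model $\mathcal M_T=\{TAT^{-1},TB,CT^{-1},D\}$. *)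

(* Complex scalars: an arbitrary numClosedFieldType
   (e.g. complex R = R[i] for a real closed field R), with conjugation ^*. *)
From HB Require Import structures.
From mathcomp Require Import all_boot all_order all_algebra.
Set Implicit Arguments. Unset Strict Implicit. Unset Printing Implicit Defensive.
Import Order.TTheory GRing.Theory Num.Theory.
Local Open Scope ring_scope.

Section Defs.
Variable K : numClosedFieldType.

Definition ctmx (p q : nat) (A : 'M[K]_(p, q)) : 'M[K]_(q, p) :=
  (map_mx Num.conj A)^T.

Definition hermitian (p : nat) (Y : 'M[K]_p) : Prop := ctmx Y = Y.

Definition posdef (p : nat) (Y : 'M[K]_p) : Prop :=
  hermitian Y /\ forall x : 'cV[K]_p, x != 0 -> 0 < (ctmx x *m Y *m x) 0 0.

Variables n m : nat.

Definition Wmx (A : 'M[K]_n) (B : 'M[K]_(n, m)) (C : 'M[K]_(m, n)) (D : 'M[K]_m)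
    (X : 'M[K]_n) : 'M[K]_(n + m) :=
  block_mx (X - ctmx A *m X *m A) (ctmx C - ctmx A *m X *m B)
           (C - ctmx B *m X *m A) (ctmx D + D - ctmx B *m X *m B).

Definition Xgg (A : 'M[K]_n) (B : 'M[K]_(n, m)) (C : 'M[K]_(m, n)) (D : 'M[K]_m)
    (X : 'M[K]_n) : Prop :=
  hermitian X /\ posdef (Wmx A B C D X) /\ posdef X.

(* \hat W(X, M), a 3x3 block matrix with block sizes n, n, m *)
Definition What (A : 'M[K]_n) (B : 'M[K]_(n, m)) (C : 'M[K]_(m, n)) (D : 'M[K]_m)
    (X : 'M[K]_n) : 'M[K]_(n + n + m) :=
  block_mx (block_mx (invmx X) A (ctmx A) X) (col_mx B (ctmx C))
           (row_mx (ctmx B) C) (ctmx D + D).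

Definition Ds : 'M[K]_(n + n + m) :=
  block_mx 1%:M 0 0 ((sqrtC 2)^-1)%:M.

Definition Lmx (T : 'M[K]_n) : 'M[K]_(n + n + m) :=
  block_mx (block_mx T 0 0 (ctmx (invmx T))) 0 0 1%:M.
Definition Rmx (T : 'M[K]_n) : 'M[K]_(n + n + m) :=
  block_mx (block_mx (ctmx T) 0 0 (invmx T)) 0 0 1%:M.

Definition Gmx (A : 'M[K]_n) (B : 'M[K]_(n, m)) (C : 'M[K]_(m, n)) (D : 'M[K]_m)
    (X T : 'M[K]_n) : 'M[K]_(n + n + m) :=
  Lmx T *m (Ds *m What A B C D X *m Ds) *m Rmx T.

(* D_s \hat W(I_n, M_T) D_s with M_T = {T A T^-1, T B, C T^-1, D} *)
Definition GT_target (A : 'M[K]_n) (B : 'M[K]_(n, m)) (C : 'M[K]_(m, n))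
    (D : 'M[K]_m) (T : 'M[K]_n) : 'M[K]_(n + n + m) :=
  Ds *m What (T *m A *m invmx T) (T *m B) (C *m invmx T) D 1%:M *m Ds.

End Defs.

From Pilot Require Import Defs.
From mathcomp Require Import all_boot all_order all_algebra spectral ring.
Import Order.TTheory GRing.Theory Num.Theory.
Local Open Scope ring_scope.
Set Implicit Arguments. Unset Strict Implicit. Unset Printing Implicit Defensive.

(* Conjugating by diag(T, T^-H, I) is the change of state coordinates x |-> T x:
   it maps \hat W(X, M) to \hat W(Y, M_T) with Y = T^-H X T^-1, and it commutes
   with D_s. Hence trace G(T) = tr Y^-1 + tr Y + tr(D^H + D)/2. The spectral
   theorem gives X = S^H S, so Y = Z^H Z with Z = S T^-1, and tr Y^-1 + tr Y >= 2n
   because the trace of (Z^H - Z^-1)^H (Z^H - Z^-1) = Z Z^H - 2 I + Z^-H Z^-1 is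
   nonnegative; equality holds at Y = I, i.e. when T^H T = X. The determinant does
   not depend on T since det diag(T, T^-H, I) * det diag(T^H, T^-1, I) = 1. *)

Section ConjugateTranspose.
Variable K : numClosedFieldType.

Lemma ctmxM p q r (A : 'M[K]_(p, q)) (B : 'M[K]_(q, r)) :
  ctmx (A *m B) = ctmx B *m ctmx A.
Proof. by rewrite /ctmx map_mxM trmx_mul. Qed.

Lemma ctmxK p q (A : 'M[K]_(p, q)) : ctmx (ctmx A) = A.
Proof. by apply/matrixP=> i j; rewrite !mxE conjCK. Qed.

Lemma ctmxB p q (A B : 'M[K]_(p, q)) : ctmx (A - B) = ctmx A - ctmx B.
Proof. by apply/matrixP=> i j; rewrite !mxE rmorphB. Qed.

Lemma ctmx1 p : ctmx (1%:M : 'M[K]_p) = 1%:M.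
Proof. by apply/matrixP=> i j; rewrite !mxE rmorph_nat eq_sym. Qed.

Lemma ctmxV p (T : 'M[K]_p) : ctmx (invmx T) = invmx (ctmx T).
Proof. by rewrite /ctmx map_invmx trmx_inv. Qed.

Lemma unitmx_ctmx p (T : 'M[K]_p) : (ctmx T \in unitmx) = (T \in unitmx).
Proof. by rewrite /ctmx unitmx_tr map_unitmx. Qed.

Lemma ctmx_delta p q (i : 'I_p) (j : 'I_q) :
  ctmx (delta_mx i j : 'M[K]_(p, q)) = delta_mx j i.
Proof. by rewrite /ctmx map_delta_mx trmx_delta. Qed.

Lemma ctmx_trmxC p q (A : 'M[K]_(p, q)) : ctmx A = (A ^t*)%sesqui.
Proof. by rewrite /ctmx map_trmx. Qed.

Lemma mxtrace_ctmx_mul_ge0 p q (Z : 'M[K]_(p, q)) : 0 <= \tr (ctmx Z *m Z).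
Proof.
apply: sumr_ge0 => i _; rewrite mxE; apply: sumr_ge0 => j _.
by rewrite !mxE mulrC mul_conjC_ge0.
Qed.

End ConjugateTranspose.

Section SquareMatrices.
Variables (K : numClosedFieldType) (n : nat).
Implicit Types S T X Z : 'M[K]_n.

Lemma invmxM S T : S \in unitmx -> T \in unitmx ->
  invmx (S *m T) = invmx T *m invmx S.
Proof.
move=> Su Tu; have STu : S *m T \in unitmx by rewrite unitmx_mul Su Tu.
apply: (can_inj (mulKmx STu)).
by rewrite mulmxV // -mulmxA (mulmxA T) mulmxV // mul1mx mulmxV.
Qed.

Lemma invmx_ctmx_mul Z : Z \in unitmx ->
  invmx (ctmx Z *m Z) = invmx Z *m ctmx (invmx Z).
Proof. by move=> Zu; rewrite invmxM ?unitmx_ctmx // ctmxV. Qed.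

Lemma mxtrace_invmx_add_ge Z : Z \in unitmx ->
  \tr (1%:M : 'M[K]_n) *+ 2 <= \tr (invmx (ctmx Z *m Z)) + \tr (ctmx Z *m Z).
Proof.
move=> Zu; have := mxtrace_ctmx_mul_ge0 (ctmx Z - invmx Z).
rewrite ctmxB ctmxK mulmxBl !mulmxBr -ctmxM mulmxV // ctmx1 !raddfB /=.
rewrite (mxtrace_mulC Z) (mxtrace_mulC (ctmx (invmx Z))) invmx_ctmx_mul //.
move=> tr_ge0; rewrite -subr_ge0; apply: le_trans tr_ge0 _.
by rewrite le_eqVlt mulr2n; apply/predU1l; ring.
Qed.

(* Unqualified, [hermitian] is the sesquilinear-form notation of [spectral]. *)
Lemma hermitian_spectralE X : Defs.hermitian X ->
  X = ctmx (spectralmx X) *m diag_mx (spectral_diag X) *m spectralmx X.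
Proof.
move=> hX; rewrite ctmx_trmxC -invmx_unitary ?spectral_unitarymx //.
by apply/orthomx_spectralP/normalmxP; rewrite -ctmx_trmxC hX.
Qed.

Lemma posdef_spectral_diag_gt0 X : posdef X -> forall j, 0 < spectral_diag X 0 j.
Proof.
move=> [hX Xpos] j; set P := spectralmx X; set d := spectral_diag X.
have Pu : ctmx P \in unitmx by rewrite unitmx_ctmx spectral_unit.
have x_neq0 : ctmx P *m (delta_mx j 0 : 'cV[K]_n) != 0.
  apply/negP => /eqP/(congr1 (mulmx (invmx (ctmx P)))).
  rewrite mulKmx // mulmx0 => /matrixP/(_ j 0)/eqP.
  by rewrite !mxE !eqxx oner_eq0.
have := Xpos _ x_neq0.
rewrite ctmxM ctmxK ctmx_delta [X in _ *m X *m _](hermitian_spectralE hX) -/P -/d.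
have PP : P *m ctmx P = 1%:M.
  by rewrite ctmx_trmxC -invmx_unitary ?spectral_unitarymx // mulmxV ?spectral_unit.
rewrite !mulmxA -(mulmxA _ P) PP mulmx1 -(mulmxA _ P) PP mulmx1.
by rewrite -rowE row_diag_mx -scalemxAl mul_delta_mx !mxE !eqxx mulr1.
Qed.

Lemma posdef_ctmx_factor X : posdef X -> exists2 T, T \in unitmx & ctmx T *m T = X.
Proof.
move=> Xpd; have d_gt0 := posdef_spectral_diag_gt0 Xpd.
set P := spectralmx X; set d := spectral_diag X.
set s : 'rV[K]_n := map_mx sqrtC d.
have cs : ctmx (diag_mx s) = diag_mx s.
  apply/matrixP=> i j; rewrite !mxE; case: (eqVneq i j) => [<-|_] /=.
    by rewrite geC0_conj // sqrtC_ge0 ltW.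
  by rewrite conjC0.
exists (diag_mx s *m P).
  rewrite unitmx_mul spectral_unit andbT unitmxE det_diag unitfE.
  by apply/prodf_neq0 => j _; rewrite mxE sqrtC_eq0 gt_eqF.
rewrite ctmxM cs [RHS](hermitian_spectralE Xpd.1) -/P -/d -!mulmxA; congr (_ *m _).
rewrite !mulmxA mulmx_diag; congr (_ *m _); congr diag_mx.
by apply/rowP => j; rewrite !mxE -expr2 sqrtCK.
Qed.

End SquareMatrices.

Section StateCoordinates.
Variables (K : numClosedFieldType) (n m : nat).
Variables (A : 'M[K]_n) (B : 'M[K]_(n, m)) (C : 'M[K]_(m, n)) (D : 'M[K]_m).
Implicit Types X T : 'M[K]_n.

Local Notation Ds := (Ds K n m).

Lemma Lmx_What_Rmx X T : X \in unitmx -> T \in unitmx ->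
  Lmx m T *m What A B C D X *m Rmx m T =
  What (T *m A *m invmx T) (T *m B) (C *m invmx T) D
       (ctmx (invmx T) *m X *m invmx T).
Proof.
move=> Xu Tu; have Tu' : ctmx (invmx T) \in unitmx by rewrite unitmx_ctmx unitmx_inv.
rewrite /Lmx /What /Rmx !mulmx_block !mul0mx !mulmx0 !addr0 !add0r !mul1mx !mulmx1.
rewrite !mulmx_block mul_block_col mul_row_block !mul0mx !mulmx0 !addr0 !add0r.
rewrite !invmxM ?unitmx_mul ?Tu' ?unitmx_inv // invmxK ctmxV invmxK.
by rewrite !ctmxM ctmxV !mulmxA.
Qed.

Lemma Lmx_Ds T : Lmx m T *m Ds = Ds *m Lmx m T.
Proof. by rewrite /Lmx /Ds !mulmx_block !mul0mx !mulmx0 !addr0 !add0r !mul1mx !mulmx1. Qed.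

Lemma Ds_Rmx T : Ds *m Rmx m T = Rmx m T *m Ds.
Proof. by rewrite /Rmx /Ds !mulmx_block !mul0mx !mulmx0 !addr0 !add0r !mul1mx !mulmx1. Qed.

Lemma GmxE X T : X \in unitmx -> T \in unitmx ->
  Gmx A B C D X T =
  Ds *m What (T *m A *m invmx T) (T *m B) (C *m invmx T) D
             (ctmx (invmx T) *m X *m invmx T) *m Ds.
Proof.
by move=> Xu Tu; rewrite -Lmx_What_Rmx // /Gmx !mulmxA Lmx_Ds -!mulmxA Ds_Rmx.
Qed.

Lemma mxtrace_Ds_What X :
  \tr (Ds *m What A B C D X *m Ds) = \tr (invmx X) + \tr X + \tr (ctmx D + D) / 2.
Proof.
rewrite /Ds /What !mulmx_block !mul0mx !mulmx0 !addr0 !add0r !mul1mx !mulmx1.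
rewrite !mxtrace_block mul_mx_scalar mul_scalar_mx scalerA mxtraceZ.
by rewrite -invfM -expr2 sqrtCK mulrC.
Qed.

Lemma det_Lmx_mul_Rmx T : T \in unitmx -> \det (Lmx m T) * \det (Rmx m T) = 1.
Proof.
move=> Tu; rewrite !det_ublock !det1 !mulr1 [\det (ctmx T) * _]mulrC mulrACA.
by rewrite -!det_mulmx -ctmxM mulmxV // ctmx1 mul1mx det1.
Qed.

Lemma det_Gmx X T : T \in unitmx ->
  \det (Gmx A B C D X T) = \det (Ds *m What A B C D X *m Ds).
Proof. by move=> Tu; rewrite /Gmx !det_mulmx mulrAC det_Lmx_mul_Rmx // mul1r. Qed.

End StateCoordinates.

Theorem lemma4p5 (K : numClosedFieldType) (n m : nat)
    (A : 'M[K]_n) (B : 'M[K]_(n, m)) (C : 'M[K]_(m, n)) (D : 'M[K]_m)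
    (X : 'M[K]_n) :
  Xgg A B C D X ->
  (* factorizations X = T^H T exist (so the minimum below is attained) *)
  (exists T : 'M[K]_n, T \in unitmx /\ ctmx T *m T = X) /\
  (* for X = T^H T : G(T) = D_s \hat W(I_n, M_T) D_s *)
  (forall T : 'M[K]_n, T \in unitmx -> ctmx T *m T = X ->
     Gmx A B C D X T = GT_target A B C D T) /\
  (* such T minimize trace G over all nonsingular T *)
  (forall T T' : 'M[K]_n, T \in unitmx -> ctmx T *m T = X -> T' \in unitmx ->
     \tr (GT_target A B C D T) <= \tr (Gmx A B C D X T')) /\
  (* det G(T) is independent of the nonsingular T ... *)
  (forall T T' : 'M[K]_n, T \in unitmx -> T' \in unitmx ->
     \det (Gmx A B C D X T) = \det (Gmx A B C D X T')) /\
  (* ... and equals det(D_s \hat W(I_n, M_T) D_s) for X = T^H T *)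
  (forall T T' : 'M[K]_n, T \in unitmx -> ctmx T *m T = X -> T' \in unitmx ->
     \det (Gmx A B C D X T') = \det (GT_target A B C D T)).
Proof.
move=> [_ [_ Xpd]]; have [S Su XS] := posdef_ctmx_factor Xpd.
have Xu : X \in unitmx by rewrite -XS unitmx_mul unitmx_ctmx Su.
have Gmx_factor T : T \in unitmx -> ctmx T *m T = X ->
    Gmx A B C D X T = GT_target A B C D T.
  move=> Tu XT; rewrite GmxE // -XT mulmxA -ctmxM mulmxV // ctmx1 mul1mx mulmxV //.
split; first by exists S.
split; first exact: Gmx_factor.
split.
  move=> T T' Tu XT T'u; rewrite GmxE // /GT_target !mxtrace_Ds_What.
  rewrite invmx1 lerD2r -mulr2n -XT !mulmxA -ctmxM -mulmxA.
  by apply: mxtrace_invmx_add_ge; rewrite unitmx_mul Tu unitmx_inv.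
split; first by move=> T T' Tu T'u; rewrite !det_Gmx.
by move=> T T' Tu XT T'u; rewrite -Gmx_factor // !det_Gmx.
Qed.
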